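(* Let $p<q$ be odd primes. Then $n=pq$ is a Gaussian Carmichael number if and only if $q=p+2$ and $8$ divides $p+q$.
   Context: The function $\mathcal{F}$ is defined by $\mathcal{F}(n)=n-1$ if $n\equiv 1\pmod 4$, $\mathcal{F}(n)=n+1$ if $n\equiv 3 \pmod 4$, $\mathcal{F}(n)=n$ otherwise. A composite integer $n$ is a Gaussian Fermat pseudoprime to base $z\in\mathbb{Z}[i]$ if $\gcd(n,z\overline{z})=1$ and $(z/\overline{z})^{\mathcal{F}(n)}\equiv 1\pmod n$ in $\mathbb{Z}[i]/n\mathbb{Z}[i]$. A composite $n$ is a Gaussian Carmichael number if it is a Gaussian Fermat pseudoprime to base $z$ for every $z\in\mathbb{Z}[i]$ with $\gcd(n,z\overline{z})=1$. *)

(* Gaussian integers Z[i] are represented as pairs (a, b) : int * int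
   standing for a + b i. *)
From HB Require Import structures.
From mathcomp Require Import all_boot all_order all_algebra.
Set Implicit Arguments. Unset Strict Implicit. Unset Printing Implicit Defensive.
Import Order.TTheory GRing.Theory Num.Theory.

Local Open Scope ring_scope.

Definition gauss := (int * int)%type.

Definition gconj (z : gauss) : gauss := (z.1, - z.2).
Definition gmul (z w : gauss) : gauss :=
  (z.1 * w.1 - z.2 * w.2, z.1 * w.2 + z.2 * w.1).
Definition gone : gauss := (1, 0).
Definition gexp (z : gauss) (k : nat) : gauss := iter k (gmul z) gone.

Definition gnorm (z : gauss) : nat := absz (z.1 ^+ 2 + z.2 ^+ 2).

(* congruence in Z[i] modulo the rational integer n: n divides z - w in Z[i] *)
Definition gcongr (n : nat) (z w : gauss) : Prop :=
  ((z.1 == w.1 %[mod n%:Z])%Z) /\ ((z.2 == w.2 %[mod n%:Z])%Z).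

Local Close Scope ring_scope.

Definition calF (n : nat) : nat :=
  if n %% 4 == 1 then n.-1 else if n %% 4 == 3 then n.+1 else n.

Definition composite (n : nat) : bool := (1 < n) && ~~ prime n.

(* (z / conj z)^F(n) = 1 in Z[i]/nZ[i]; the quotient z / conj z is any
   w with w * conj z = z mod n (it exists and is unique mod n since
   conj z is invertible mod n when gcd(n, z conj z) = 1). *)
Definition gauss_fermat_psp (n : nat) (z : gauss) : Prop :=
  composite n /\ coprime n (gnorm z) /\
  (forall w : gauss, gcongr n (gmul w (gconj z)) z ->
     gcongr n (gexp w (calF n)) gone).

Definition gauss_carmichael (n : nat) : Prop :=
  composite n /\
  (forall z : gauss, coprime n (gnorm z) -> gauss_fermat_psp n z).

(* A Gaussian integer z = a + b i is studied through its images phi c z = a + b c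
   in fields of characteristic r containing a square root c of -1; for an odd
   prime r the two images under c and -c determine z modulo r.  Let
   m(r) = r - 1 if r = 1 mod 4 and m(r) = r + 1 if r = 3 mod 4.  The Gaussian
   integers of norm 1 modulo r form a cyclic group of order m(r): every such w
   satisfies w ^ m(r) = 1 (Frobenius), and a generator is obtained from a
   primitive root of F_r, resp. F_(r^2).  Since z / conj z has norm 1 and every
   w of norm 1 is (1 + w) / conj (1 + w), this yields a Korselt criterion: for
   distinct odd primes r and s, r s is a Gaussian Carmichael number iff m(r)
   and m(s) divide F(r s).  Finally m(p) | F(p q) iff m(p) | m(q), so the
   criterion says m(p) = m(q), i.e. p = 3 mod 4 and q = p + 2. *)

From mathcomp Require Import all_boot all_order all_algebra all_field.
From mathcomp Require cyclic.
From mathcomp Require Import ring zify.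
(* Defs is imported last: its [gnorm] must shadow the group-theoretic one. *)
From Pilot Require Import Defs.
Set Implicit Arguments. Unset Strict Implicit. Unset Printing Implicit Defensive.
Import Order.TTheory GRing.Theory Num.Theory.

Lemma odd_mod4 (r : nat) : odd r = (r %% 4 == 1) || (r %% 4 == 3).
Proof. by rewrite {1}(divn_eq r 4) oddD oddM andbF /=; lia. Qed.

(* m(r): the order of the group of norm-one Gaussian integers modulo an odd
   prime r, namely r - 1 if -1 is a square modulo r and r + 1 otherwise. *)
Definition norm1_order (r : nat) : nat := if r %% 4 == 1 then r.-1 else r.+1.

(* m(r) > 2, so an element of order m(r) is not -1. *)
Lemma norm1_order_gt2 (r : nat) : 1 < r -> 2 < norm1_order r.
Proof. by rewrite /norm1_order; case: ifP => r4; lia. Qed.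

Lemma composite_mul_primes (r s : nat) : prime r -> prime s -> composite (r * s).
Proof.
move=> prime_r prime_s; have [r_gt1 s_gt1] := (prime_gt1 prime_r, prime_gt1 prime_s).
rewrite /composite; apply/andP; split; first by nia.
by apply/primeP => -[_ /(_ r (dvdn_mulr s (dvdnn r)))] /orP[] /eqP; nia.
Qed.

Local Open Scope ring_scope.

Lemma gnormE (z : gauss) : (gnorm z)%:Z = z.1 ^+ 2 + z.2 ^+ 2.
Proof. by rewrite /gnorm abszE ger0_norm // addr_ge0 // sqr_ge0. Qed.

Lemma gcongr_crt (r s : nat) (z1 z2 : gauss) : coprime r s ->
  exists w : gauss, gcongr r w z1 /\ gcongr s w z2.
Proof.
move=> crs; have czrs : coprimez r s by rewrite /coprimez /gcdz /=.
exists (zchinese r s z1.1 z2.1, zchinese r s z1.2 z2.2).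
by split; split; apply/eqP; rewrite /= ?zchinese_modl ?zchinese_modr.
Qed.

Lemma gcongr_mul_coprime (r s : nat) (z w : gauss) : coprime r s ->
  gcongr r z w -> gcongr s z w -> gcongr (r * s) z w.
Proof.
move=> crs [h1 h2] [h3 h4]; have czrs : coprimez r s by rewrite /coprimez /gcdz /=.
by split; rewrite PoszM zchinese_remainder // ?h1 ?h2 ?h3 ?h4.
Qed.

Lemma gcongr_dvd (d n : nat) (z w : gauss) : (d %| n)%N -> gcongr n z w -> gcongr d z w.
Proof.
move=> dvd_dn [h1 h2]; have dvdz_dn : (d%:Z %| n%:Z)%Z by [].
by split; rewrite eqz_mod_dvd; apply: dvdz_trans dvdz_dn _; rewrite -eqz_mod_dvd.
Qed.

Lemma gnorm_gcongr (n : nat) (z w : gauss) : gcongr n z w -> gnorm z = gnorm w %[mod n].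
Proof.
case; rewrite !eqz_mod_dvd => h1 h2; apply/eqP; rewrite -eqz_nat -!modz_nat !gnormE eqz_mod_dvd.
have -> : z.1 ^+ 2 + z.2 ^+ 2 - (w.1 ^+ 2 + w.2 ^+ 2) =
          (z.1 - w.1) * (z.1 + w.1) + (z.2 - w.2) * (z.2 + w.2) by ring.
by rewrite rpredD // dvdz_mulr.
Qed.

(* Every w of norm 1 modulo n is a quotient z / conj z, namely for z = 1 + w:
   w * conj (1 + w) = w + w * conj w = w + 1. *)
Lemma norm1_quotient (n : nat) (w : gauss) : gnorm w = 1 %[mod n] ->
  gcongr n (gmul w (gconj (1 + w.1, w.2))) (1 + w.1, w.2).
Proof.
move=> /eqP; rewrite -eqz_nat -!modz_nat gnormE => norm1.
split; rewrite /gmul /gconj /=; last by apply/eqP; congr (_ %% _)%Z; ring.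
have -> : w.1 * (1 + w.1) - w.2 * - w.2 = (w.1 ^+ 2 + w.2 ^+ 2) + w.1 by ring.
by rewrite eqz_modDr.
Qed.

(* The image a + b c of z = a + b i in a commutative ring with an element c;
   when c * c = -1 this is a ring morphism from Z[i]. *)
Definition phi (L : comNzRingType) (c : L) (z : gauss) : L := z.1%:~R + z.2%:~R * c.

Section GaussianImage.
Variables (L : comNzRingType) (c : L).
Hypothesis sqr_c : c * c = -1.

Lemma phi_mul (z w : gauss) : phi c (gmul z w) = phi c z * phi c w.
Proof.
rewrite /phi /gmul /= !(intrD, intrM, intrN).
have expand (a b a' b' : L) :
  (a * a' - b * b') + (a * b' + b * a') * c = (a + b * c) * (a' + b' * c) - b * b' * (c * c + 1).
  by ring.
by rewrite expand sqr_c addNr mulr0 subr0.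
Qed.

Lemma phi_one : phi c gone = 1.
Proof. by rewrite /phi /= mul0r addr0. Qed.

Lemma phi_exp (z : gauss) (k : nat) : phi c (gexp z k) = phi c z ^+ k.
Proof.
elim: k => [|k IHk]; first by rewrite expr0 phi_one.
by rewrite /gexp iterS -/(gexp z k) phi_mul IHk exprS.
Qed.

Lemma phi_conj (z : gauss) : phi c (gconj z) = phi (- c) z.
Proof. by rewrite /phi /= intrN mulNr mulrN. Qed.

Lemma phi_norm (z : gauss) : (gnorm z)%:R = phi c z * phi (- c) z.
Proof.
rewrite -[(gnorm z)%:R]/((gnorm z)%:Z%:~R) gnormE /phi intrD !expr2 !intrM -!expr2.
have expand (a b : L) : a ^+ 2 + b ^+ 2 = (a + b * c) * (a + b * - c) + b ^+ 2 * (c * c + 1).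
  by ring.
by rewrite expand sqr_c addNr mulr0 addr0.
Qed.

End GaussianImage.

Lemma sqrtm1_exp_odd (L : nzRingType) (c : L) (r : nat) : c * c = -1 -> odd r ->
  c ^+ r = if (r %% 4 == 1)%N then c else - c.
Proof.
move=> sqr_c odd_r; have c4 : c ^+ 4 = 1.
  by rewrite (exprM c 2 2) [c ^+ 2]expr2 sqr_c expr2 mulrNN mulr1.
rewrite {1}(divn_eq r 4) exprD mulnC exprM c4 expr1n mul1r.
move: odd_r; rewrite odd_mod4 => /orP[] /eqP ->; first by [].
by rewrite /= exprS expr2 mulrA sqr_c mulN1r.
Qed.

Section Characteristic.
Variables (L : nzRingType) (p : nat).
Hypothesis pcharL : p \in [pchar L].

Lemma intr_eq_pchar (x y : int) : (x%:~R == y%:~R :> L) = (x == y %[mod p])%Z.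
Proof.
rewrite eqz_mod_dvd -subr_eq0 -intrB; case: (x - y) => n; rewrite /dvdz /=.
  exact: esym (dvdn_pcharf pcharL n).
by rewrite NegzE intrN oppr_eq0 -(dvdn_pcharf pcharL).
Qed.

Lemma natr_eq_pchar (a b : nat) : (a%:R == b%:R :> L) = (a == b %[mod p]).
Proof. by rewrite -[a%:R]/(a%:Z%:~R) -[b%:R]/(b%:Z%:~R) intr_eq_pchar !modz_nat eqz_nat. Qed.

Lemma two_neq0_pchar : odd p -> 2%:R != 0 :> L.
Proof.
move=> odd_p; rewrite -(dvdn_pcharf pcharL) dvdn_prime2 ?(pcharf_prime pcharL) //.
by apply: contraTneq odd_p => ->.
Qed.

End Characteristic.

Section GaussianImageChar.
Variables (L : comNzRingType) (p : nat) (c : L).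
Hypothesis pcharL : p \in [pchar L].

Lemma phi_gcongr (z w : gauss) : gcongr p z w -> phi c z = phi c w.
Proof.
by case; rewrite -!(intr_eq_pchar pcharL) => /eqP-e1 /eqP-e2; rewrite /phi e1 e2.
Qed.

(* The Frobenius map fixes the integer coordinates and acts on c. *)
Lemma phi_frob (z : gauss) : phi c z ^+ p = phi (c ^+ p) z.
Proof.
rewrite /phi -!(pFrobenius_autE pcharL) pFrobenius_autD_comm; last exact: mulrC.
by rewrite pFrobenius_autM_comm ?pFrobenius_aut_int //; exact: mulrC.
Qed.

End GaussianImageChar.

Lemma phi_sep (L : fieldType) (c : L) (p : nat) (z w : gauss) :
  c * c = -1 -> p \in [pchar L] -> odd p ->
  phi c z = phi c w -> phi (- c) z = phi (- c) w -> gcongr p z w.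
Proof.
move=> sqr_c pcharL odd_p e1 e2.
set a : L := (z.1 - w.1)%:~R; set b : L := (z.2 - w.2)%:~R.
have hsum : a + b * c = 0.
  by rewrite -(subrr (phi c w)) -{1}e1 /phi /a /b !intrB; ring.
have hdiff : a - b * c = 0.
  by rewrite -(subrr (phi (- c) w)) -{1}e2 /phi /a /b !intrB; ring.
have two_neq0 := two_neq0_pchar pcharL odd_p.
have c_neq0 : c != 0.
  by apply: contra_eq_neq sqr_c => ->; rewrite mul0r eq_sym oppr_eq0 oner_eq0.
have /eqP : 2%:R * a = 0.
  by rewrite -(addr0 0) -{1}hsum -hdiff; ring.
have /eqP : 2%:R * c * b = 0.
  by rewrite -(subrr 0) -{1}hsum -hdiff; ring.
rewrite !mulf_eq0 (negPf two_neq0) (negPf c_neq0) /= => /eqP-b0 /eqP-a0.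
by split; rewrite -(intr_eq_pchar pcharL) -subr_eq0 -intrB; apply/eqP.
Qed.

Lemma coprime_gnorm_pchar (L : comNzRingType) (c : L) (r : nat) (z : gauss) :
  c * c = -1 -> r \in [pchar L] -> coprime r (gnorm z) = (phi c z * phi (- c) z != 0).
Proof.
move=> sqr_c pcharL.
by rewrite prime_coprime ?(pcharf_prime pcharL) // (dvdn_pcharf pcharL) (phi_norm sqr_c).
Qed.

(* The image of a norm-one Gaussian integer has order dividing m(r): for
   r = 1 mod 4 it is fixed by Frobenius, for r = 3 mod 4 Frobenius maps it to
   its conjugate, i.e. to its inverse. *)
Lemma phi_norm1_exp (L : fieldType) (c : L) (r : nat) (w : gauss) :
  c * c = -1 -> r \in [pchar L] -> odd r ->
  phi c w * phi (- c) w = 1 -> phi c w ^+ norm1_order r = 1.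
Proof.
move=> sqr_c pcharL odd_r norm1; have frob := @phi_frob _ _ c pcharL w.
rewrite (sqrtm1_exp_odd sqr_c odd_r) /norm1_order in frob *.
case: ifP frob => _ frob; last by rewrite exprSr frob mulrC.
have w_neq0 : phi c w != 0 by apply: contra_eq_neq norm1 => ->; rewrite mul0r eq_sym oner_eq0.
apply: (mulIf w_neq0); rewrite mul1r -exprSr prednK ?frob //.
exact: prime_gt0 (pcharf_prime pcharL).
Qed.

Lemma norm1_exp (L : fieldType) (c : L) (r : nat) (w : gauss) (k : nat) :
  c * c = -1 -> r \in [pchar L] -> odd r ->
  phi c w * phi (- c) w = 1 -> (norm1_order r %| k)%N -> gcongr r (gexp w k) gone.
Proof.
move=> sqr_c pcharL odd_r norm1 /dvdnP[j ->].
have sqr_Nc : (- c) * (- c) = -1 by rewrite mulrNN.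
have norm1N : phi (- c) w * phi (- - c) w = 1 by rewrite opprK mulrC.
apply: (phi_sep sqr_c pcharL odd_r); rewrite !phi_exp // !phi_one mulnC exprM.
  by rewrite (phi_norm1_exp sqr_c pcharL odd_r norm1) expr1n.
by rewrite (phi_norm1_exp sqr_Nc pcharL odd_r norm1N) expr1n.
Qed.

Lemma finfield_prim_root (F : finFieldType) : exists g : F, (#|F|.-1).-primitive_root g.
Proof.
have F_gt1 := finNzRing_gt1 F.
have n_gt0 : (0 < #|F|.-1)%N by rewrite -subn1 subn_gt0.
have unity_nz : all (#|F|.-1).-unity_root (enum (predC1 (0 : F))).
  apply/allP=> x; rewrite mem_enum inE unity_rootE => x_neq0.
  by apply/eqP/(mulIf x_neq0); rewrite mul1r -exprSr prednK ?expf_card // ltnW.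
have := cyclic.has_prim_root n_gt0 unity_nz (enum_uniq _).
rewrite -cardE cardC1 leqnn => /(_ isT) /hasP[g _ prim_g].
by exists g.
Qed.

(* A finite field F with 4 | #|F| - 1 contains a square root of -1, namely
   g ^ ((#|F| - 1) / 4) for a primitive root g. *)
Lemma finfield_sqrtm1 (F : finFieldType) : (4 %| #|F|.-1)%N -> exists c : F, c * c = -1.
Proof.
move=> dvd4; have [g prim_g] := finfield_prim_root F.
set n := #|F|.-1 in dvd4 prim_g.
have n_gt0 : (0 < n)%N by rewrite /n -subn1 subn_gt0 finNzRing_gt1.
exists (g ^+ (n %/ 4)); rewrite -exprD.
have /eqP : (g ^+ (n %/ 4 + n %/ 4)) ^+ 2 = 1.
  by rewrite -exprM; apply/eqP; rewrite -(prim_order_dvd prim_g); apply/dvdnP; exists 1%N; lia.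
rewrite sqrf_eq1 => /orP[|/eqP //].
rewrite -(prim_order_dvd prim_g) => /(dvdn_leq _); lia.
Qed.

(* For an odd prime r, the field with r^2 elements contains a square root of -1,
   since 8 divides r^2 - 1. *)
Lemma gauss_residue_field (r : nat) : prime r -> odd r ->
  exists (F : finFieldType) (c : F), [/\ r \in [pchar F], #|F| = (r ^ 2)%N & c * c = -1].
Proof.
move=> prime_r odd_r; have [F pcharF cardF] := pPrimePowerField prime_r (isT : (0 < 2)%N).
have [c sqr_c] : exists c : F, c * c = -1.
  apply: finfield_sqrtm1; rewrite cardF (divn_eq r 2) modn2 odd_r.
  by apply/dvdnP; exists ((r %/ 2) * (r %/ 2) + r %/ 2)%N; nia.
by exists F, c.
Qed.

(* For r = 3 mod 4, every element of the field with r^2 elements is the image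
   a + b c of a Gaussian integer: the r^2 residues (a, b) have distinct images. *)
Lemma phi_surj_mod3 (F : finFieldType) (c : F) (r : nat) :
  c * c = -1 -> r \in [pchar F] -> (r %% 4 = 3)%N -> #|F| = (r ^ 2)%N ->
  forall x : F, exists w : gauss, phi c w = x.
Proof.
move=> sqr_c pcharF r4 cardF x.
have odd_r : odd r by rewrite odd_mod4 r4.
have conj_frob (z : gauss) : phi (- c) z = phi c z ^+ r.
  by rewrite (phi_frob _ pcharF) (sqrtm1_exp_odd sqr_c odd_r) r4.
pose f (k : 'I_r * 'I_r) := phi c ((val k.1)%:Z, (val k.2)%:Z).
have f_inj : injective f.
  move=> [a b] [a' b'] eq_f.
  have /(phi_sep sqr_c pcharF odd_r) : phi (- c) (a%:Z, b%:Z) = phi (- c) (a'%:Z, b'%:Z).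
    by rewrite !conj_frob; congr (_ ^+ _).
  case/(_ eq_f) => /=; rewrite !modz_nat !eqz_nat !modn_small //.
  by move=> /eqP/val_inj-> /eqP/val_inj->.
have := inj_card_onto f_inj; rewrite card_prod !card_ord cardF -mulnn leqnn.
by case/(_ isT x)/codomP=> k ->; exists ((val k.1)%:Z, (val k.2)%:Z).
Qed.

(* If w * conj z = z modulo an odd prime r with z prime to r, then w has norm 1
   modulo r, hence w ^ k = 1 modulo r whenever m(r) divides k. *)
Lemma quotient_exp (r : nat) (z w : gauss) (k : nat) : prime r -> odd r ->
  coprime r (gnorm z) -> gcongr r (gmul w (gconj z)) z ->
  (norm1_order r %| k)%N -> gcongr r (gexp w k) gone.
Proof.
move=> prime_r odd_r cop_z quot_w.
have [F [c [pcharF _ sqr_c]]] := gauss_residue_field prime_r odd_r.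
have sqr_Nc : (- c) * (- c) = -1 by rewrite mulrNN.
apply: (norm1_exp sqr_c pcharF odd_r).
have e1 := phi_gcongr c pcharF quot_w; rewrite (phi_mul sqr_c) phi_conj in e1.
have e2 := phi_gcongr (- c) pcharF quot_w; rewrite (phi_mul sqr_Nc) phi_conj opprK in e2.
move: cop_z; rewrite (coprime_gnorm_pchar _ sqr_c pcharF) => norm_z_neq0.
apply: (mulIf norm_z_neq0); rewrite mul1r -{2}e1 -{2}e2; ring.
Qed.

Definition norm1_generator (r : nat) (L : fieldType) (c : L) (w : gauss) : Prop :=
  [/\ r \in [pchar L], c * c = -1, phi c w * phi (- c) w = 1
    & forall k, phi c w ^+ k = 1 -> (norm1_order r %| k)%N].

(* For r = 1 mod 4, a primitive root g of F_r is the image of a Gaussian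
   integer whose conjugate maps to g^-1. *)
Lemma norm1_generator_mod1 (r : nat) : prime r -> (r %% 4 = 1)%N ->
  exists (L : fieldType) (c : L) (w : gauss), norm1_generator r c w.
Proof.
move=> prime_r r4; have pcharF := pchar_Fp prime_r; have cardF := card_Fp prime_r.
have odd_r : odd r by rewrite odd_mod4 r4.
have [c sqr_c] : exists c : 'F_r, c * c = -1.
  by apply: finfield_sqrtm1; rewrite cardF; apply/dvdnP; exists (r %/ 4)%N; lia.
have [g prim_g] := finfield_prim_root 'F_r; rewrite cardF in prim_g.
have g_neq0 : g != 0.
  apply/eqP=> g0; move: (prim_expr_order prim_g); rewrite g0 expr0n.
  have -> : (r.-1 == 0)%N = false by have := prime_gt1 prime_r; lia.
  by move/eqP; rewrite eq_sym oner_eq0.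
have two_neq0 := two_neq0_pchar pcharF odd_r.
have c_neq0 : c != 0.
  by apply: contra_eq_neq sqr_c => ->; rewrite mul0r eq_sym oppr_eq0 oner_eq0.
pose a := (g + g^-1) / 2%:R; pose b := (g - g^-1) / (2%:R * c).
have phi_ab (d : 'F_r) : phi d ((val a)%:Z, (val b)%:Z) = a + b * d.
  by rewrite /phi /= -[((val a)%:Z)%:~R]/((val a)%:R) -[((val b)%:Z)%:~R]/((val b)%:R) !natr_Zp.
exists 'F_r, c, ((val a)%:Z, (val b)%:Z); split=> //.
- by rewrite !phi_ab /a /b; field; rewrite two_neq0 c_neq0 g_neq0.
- rewrite phi_ab /norm1_order r4 eqxx => k gk; rewrite (prim_order_dvd prim_g).
  suff <- : a + b * c = g by rewrite gk.
  by rewrite /a /b; field; rewrite two_neq0 c_neq0.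
Qed.

(* For r = 3 mod 4, take u = g^(r-1) in F_(r^2), of order r + 1; its conjugate
   is its Frobenius image u^r = u^-1. *)
Lemma norm1_generator_mod3 (r : nat) : prime r -> (r %% 4 = 3)%N ->
  exists (L : fieldType) (c : L) (w : gauss), norm1_generator r c w.
Proof.
move=> prime_r r4; have odd_r : odd r by rewrite odd_mod4 r4.
have r_gt1 := prime_gt1 prime_r.
have [F [c [pcharF cardF sqr_c]]] := gauss_residue_field prime_r odd_r.
have [g prim_g] := finfield_prim_root F.
have cardF1 : (#|F|.-1 = r.-1 * r.+1)%N by rewrite cardF; nia.
rewrite cardF1 in prim_g.
have [w phi_w] := phi_surj_mod3 sqr_c pcharF r4 cardF (g ^+ r.-1).
have order_u : (g ^+ r.-1) ^+ r.+1 = 1 by rewrite -exprM prim_expr_order.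
have conj_w : phi (- c) w = phi c w ^+ r.
  by rewrite (phi_frob _ pcharF) (sqrtm1_exp_odd sqr_c odd_r) r4.
exists F, c, w; split=> //; first by rewrite conj_w -exprS phi_w.
move=> k; rewrite phi_w -exprM => /eqP; rewrite -(prim_order_dvd prim_g).
by rewrite /norm1_order r4 /= dvdn_pmul2l //; lia.
Qed.

Lemma norm1_generator_exists (r : nat) : prime r -> odd r ->
  exists (L : fieldType) (c : L) (w : gauss), norm1_generator r c w.
Proof.
move=> prime_r; rewrite odd_mod4 => /orP[] /eqP r4.
- exact: norm1_generator_mod1.
- exact: norm1_generator_mod3.
Qed.

(* The image of 1 + w for a generator w is nonzero, together with its
   conjugate: otherwise the image of w would be -1, of order 2 < m(r). *)
Lemma norm1_generator_succ (r : nat) (L : fieldType) (c : L) (w : gauss) :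
  norm1_generator r c w -> phi c (1 + w.1, w.2) * phi (- c) (1 + w.1, w.2) != 0.
Proof.
move=> [pcharL _ norm1 order_w].
have phi_succ (d : L) : phi d (1 + w.1, w.2) = 1 + phi d w by rewrite /phi /= intrD mulr1z addrA.
have u_neqN1 : phi c w != -1.
  apply: contraTneq (norm1_order_gt2 (prime_gt1 (pcharf_prime pcharL))) => u_eq.
  have /order_w/dvdn_leq : phi c w ^+ 2 = 1 by rewrite u_eq expr2 mulrNN mulr1.
  by move/(_ isT); rewrite leqNgt => ->.
have v_neqN1 : phi (- c) w != -1.
  apply: contra_neq u_neqN1 => v_eq.
  by move: norm1; rewrite v_eq mulrN1 => /eqP; rewrite eqr_oppLR => /eqP.
by rewrite !phi_succ mulf_neq0 // addrC addr_eq0.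
Qed.

(* For an odd prime s, if w = 1 modulo s then 1 + w = 2 is prime to s. *)
Lemma coprime_gnorm_succ_one (s : nat) (w : gauss) : odd s -> gcongr s w gone ->
  coprime s (gnorm (1 + w.1, w.2)).
Proof.
move=> odd_s [h1 h2]; have two : gcongr s (1 + w.1, w.2) (2%:Z, 0).
  by split; rewrite //= (eqz_modDl 1 w.1 1).
by rewrite -coprime_modr (gnorm_gcongr two) coprime_modr -[gnorm _]/(2 ^ 2)%N coprimeXr ?coprimen2.
Qed.

Lemma norm1_generator_lift (r s : nat) : prime r -> prime s -> odd r -> odd s -> r != s ->
  exists (L : fieldType) (c : L) (w : gauss), [/\ norm1_generator r c w,
    gnorm w = 1 %[mod r * s] & coprime (r * s) (gnorm (1 + w.1, w.2))].
Proof.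
move=> prime_r prime_s odd_r odd_s neq_rs.
have [L [c [w0 gen_w0]]] := norm1_generator_exists prime_r odd_r.
have [pcharL sqr_c norm1 _] := gen_w0.
have cop_rs : coprime r s by rewrite prime_coprime // dvdn_prime2.
have [w [w_r w_s]] := gcongr_crt w0 gone cop_rs.
have phi_w (d : L) : phi d w = phi d w0 := phi_gcongr d pcharL w_r.
have gen_w : norm1_generator r c w by rewrite /norm1_generator !phi_w.
exists L, c, w; split=> //.
  apply/eqP; rewrite chinese_remainder //; apply/andP; split; last exact/eqP/(gnorm_gcongr w_s).
  by rewrite -(natr_eq_pchar pcharL) (phi_norm sqr_c) !phi_w norm1.
rewrite coprimeMl (coprime_gnorm_succ_one odd_s w_s) andbT.
by rewrite (coprime_gnorm_pchar _ sqr_c pcharL) (norm1_generator_succ gen_w).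
Qed.

Lemma carmichael_norm1_exp (n : nat) (w : gauss) : gauss_carmichael n ->
  gnorm w = 1 %[mod n] -> coprime n (gnorm (1 + w.1, w.2)) ->
  gcongr n (gexp w (calF n)) gone.
Proof.
case=> _ carm norm1 cop; have [_ [_ frac]] := carm _ cop.
exact/frac/norm1_quotient.
Qed.

(* Necessity: a generator w modulo r lifted to w = 1 modulo s satisfies
   w ^ F(r s) = 1 modulo r, so m(r) divides F(r s). *)
Lemma carmichael_norm1_order_dvd (r s : nat) : prime r -> prime s -> odd r -> odd s ->
  r != s -> gauss_carmichael (r * s) -> (norm1_order r %| calF (r * s))%N.
Proof.
move=> prime_r prime_s odd_r odd_s neq_rs carm.
have [L [c [w [[pcharL sqr_c _ order_w] norm1 cop]]]] :=
  norm1_generator_lift prime_r prime_s odd_r odd_s neq_rs.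
apply: order_w; have := carmichael_norm1_exp carm norm1 cop.
move=> /(gcongr_dvd (dvdn_mulr s (dvdnn r))) /(phi_gcongr c pcharL).
by rewrite (phi_exp sqr_c) (phi_one c).
Qed.

(* Sufficiency: each quotient z / conj z has norm 1, so its F(r s)-th power is
   1 modulo r and modulo s as soon as m(r) and m(s) divide F(r s). *)
Lemma carmichael_of_norm1_order_dvd (r s : nat) : prime r -> prime s -> odd r -> odd s ->
  r != s -> (norm1_order r %| calF (r * s))%N -> (norm1_order s %| calF (r * s))%N ->
  gauss_carmichael (r * s).
Proof.
move=> prime_r prime_s odd_r odd_s neq_rs dvd_r dvd_s.
have comp := composite_mul_primes prime_r prime_s.
split=> // z cop_z; split=> //; split=> // w quot_w.
move: cop_z; rewrite coprimeMl => /andP[cop_r cop_s].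
apply: gcongr_mul_coprime; first by rewrite prime_coprime // dvdn_prime2.
  exact: quotient_exp prime_r odd_r cop_r (gcongr_dvd (dvdn_mulr s (dvdnn r)) quot_w) dvd_r.
exact: quotient_exp prime_s odd_s cop_s (gcongr_dvd (dvdn_mull r (dvdnn s)) quot_w) dvd_s.
Qed.

Lemma gauss_korselt (r s : nat) : prime r -> prime s -> odd r -> odd s -> r != s ->
  gauss_carmichael (r * s) <->
  (norm1_order r %| calF (r * s))%N /\ (norm1_order s %| calF (r * s))%N.
Proof.
move=> prime_r prime_s odd_r odd_s neq_rs; split; last first.
  by case; exact: carmichael_of_norm1_order_dvd.
move=> carm; split; first exact: carmichael_norm1_order_dvd.
by rewrite mulnC in carm *; apply: carmichael_norm1_order_dvd; rewrite // eq_sym.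
Qed.

Local Close Scope ring_scope.

(* Modulo m(p) we have p = +-1, so F(p q) = +-m(q): thus m(p) | F(p q) iff
   m(p) | m(q). *)
Lemma norm1_order_dvd_calF (p q : nat) : odd p -> odd q -> 1 < p ->
  (norm1_order p %| calF (p * q)) = (norm1_order p %| norm1_order q).
Proof.
move=> odd_p odd_q p_gt1; have q_gt0 : 0 < q by exact: odd_gt0.
rewrite /calF -modnMm /norm1_order.
move: odd_p odd_q; rewrite !odd_mod4 => /orP[] /eqP-p4 /orP[] /eqP-q4; rewrite p4 q4 /=.
- by rewrite (_ : (p * q).-1 = q * p.-1 + q.-1) ?dvdn_addr ?dvdn_mull //; nia.
- by rewrite (_ : (p * q).+1 = q * p.-1 + q.+1) ?dvdn_addr ?dvdn_mull //; nia.
- by rewrite (_ : (p * q).+1 = q * p.+1 - q.-1) ?dvdn_subr ?dvdn_mull //; nia.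
- by rewrite (_ : (p * q).-1 = q * p.+1 - q.+1) ?dvdn_subr ?dvdn_mull //; nia.
Qed.

Lemma norm1_order_eq (p q : nat) : odd p -> odd q -> p < q ->
  norm1_order p = norm1_order q -> p %% 4 = 3 /\ q = p + 2.
Proof.
rewrite /norm1_order !odd_mod4 => /orP[] /eqP-p4 /orP[] /eqP-q4 lt_pq.
all: by rewrite p4 q4 /=; lia.
Qed.

Theorem mainTheorem11 (p q : nat) :
  prime p -> prime q -> odd p -> odd q -> p < q ->
  (gauss_carmichael (p * q) <-> q = p + 2 /\ 8 %| p + q).
Proof.
move=> prime_p prime_q odd_p odd_q lt_pq.
have neq_pq : p != q by rewrite neq_ltn lt_pq.
have p_gt1 := prime_gt1 prime_p; have q_gt1 := prime_gt1 prime_q.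
rewrite gauss_korselt // norm1_order_dvd_calF // mulnC norm1_order_dvd_calF //.
split.
- case=> dvd_pq dvd_qp.
  have eq_m : norm1_order p = norm1_order q by apply/eqP; rewrite eqn_dvd dvd_pq.
  have [p4 ->] := norm1_order_eq odd_p odd_q lt_pq eq_m.
  split=> //; apply/dvdnP; exists (p %/ 4 + 1); lia.
- case=> eq_q /dvdnP[k eq_8k].
  have p4 : p %% 4 = 3 by move: eq_8k; rewrite eq_q; lia.
  have q4 : (p + 2) %% 4 = 1 by lia.
  by rewrite /norm1_order eq_q p4 q4 addn2.
Qed.
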